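(* Let $n$ be a non-negative integer. Then \[ \sum_{k=0}^{\lfloor n/2\rfloor}\binom{n}{2k}2^{n-2k}\binom{2k}{k}H_{2k}^{(2)}=\binom{2n}{n}H_n^{(2)}-\sum_{k=0}^{n-1}\binom{2k}{k}2^{n-k}\frac{H_n-H_k}{n-k}, \] \[ \sum_{k=0}^{n}(-1)^k\binom{n}{k}2^{-k}\binom{2k}{k}H_k^{(2)}=-\sum_{k=0}^{\lfloor n/2\rfloor-1}\binom{2k}{k}2^{-2k}\frac{H_n-H_{2k}}{n-2k}+\begin{cases}2^{-n}\binom{n}{n/2}H_n^{(2)},&n\text{ even},\\[2pt]-2^{-n+1}\binom{n-1}{(n-1)/2}\dfrac1n,&n\text{ odd},\end{cases} \] and, more generally, for every real number $v$, \[ \sum_{k=0}^{\lfloor n/2\rfloor}\binom{n}{2k}2^{n-2k}\binom{2k}{k}\binom{(2k+v)/2}{v/2}^{-1}H_{2k}^{(2)}=\binom{2n+v}{(2n+v)/2}\binom{n+v}{v/2}^{-1}H_n^{(2)}-\sum_{k=0}^{n-1}\binom{2k+v}{(2k+v)/2}2^{n-k}\binom{k+v}{v/2}^{-1}\frac{H_n-H_k}{n-k}, \] \[ \begin{aligned} \sum_{k=0}^{n}(-1)^k\binom{n}{k}2^{-k}\binom{2k+v}{(2k+v)/2}\binom{k+v}{v/2}^{-1}H_k^{(2)} &=-\sum_{k=0}^{\lfloor n/2\rfloor-1}\binom{2k}{k}2^{-2k}\binom{(2k+v)/2}{v/2}^{-1}\frac{H_n-H_{2k}}{n-2k}\\ &\quad+\begin{cases}\binom{n}{n/2}2^{-n}\binom{(n+v)/2}{v/2}^{-1}H_n^{(2)},&n\text{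 even},\\[2pt]-\binom{n-1}{(n-1)/2}2^{-n+1}\binom{(n-1+v)/2}{v/2}^{-1}\dfrac1n,&n\text{ odd}.\end{cases} \end{aligned} \]
   Context: For integers $m\ge0$, $H_m=\sum_{j=1}^m 1/j$ and $H_m^{(2)}=\sum_{j=1}^m 1/j^2$. Binomial coefficients with real or complex entries: $\binom{x}{y}=\frac{\Gamma(x+1)}{\Gamma(y+1)\Gamma(x-y+1)}$. Empty sums are zero. *)

From Stdlib Require Import Reals Factorial Rprod Binomial.
From Coquelicot Require Import Coquelicot.
Open Scope R_scope.

(* Euler's Gamma function via the Gauss product formula
   Gamma(x) = lim_{n->oo} n! n^x / (x (x+1) ... (x+n)),
   valid for every real x that is not a non-positive integer. *)
Definition Gamma (x : R) : R :=
  real (Lim_seq (fun n : nat =>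
    INR (fact n) * Rpower (INR n) x / prod_f_R0 (fun j => x + INR j) n)).

Definition binomR (x y : R) : R :=
  Gamma (x + 1) / (Gamma (y + 1) * Gamma (x - y + 1)).

Fixpoint H (m : nat) : R :=
  match m with O => 0 | S p => H p + / INR (S p) end.
Fixpoint H2 (m : nat) : R :=
  match m with O => 0 | S p => H2 p + / (INR (S p) ^ 2) end.

Fixpoint sumR (f : nat -> R) (m : nat) : R :=
  match m with O => 0 | S p => sumR f p + f p end.

(* Ordinary binomial coefficient n choose k for natural entries, as a real
   (Stdlib's Binomial.C = n! / (k! (n-k)!); Coquelicot's C is the complexes). *)
Definition binomN (n k : nat) : R := Binomial.C n k.

(* The binomial transform (T_z b)_n = sum_j C(n,j) z^(n-j) b_j satisfies T_z T_w = T_(z+w).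
   Summing the partial fraction identity
     C(n,k) (H2_n - H2_k) = sum_(j<n) C(j,k) (H_n - H_j) / (n - j)
   against z^(n-k) b_k gives
     sum_k C(n,k) z^(n-k) b_k H2_k
       = (T_z b)_n H2_n - sum_(j<n) z^(n-j) (H_n - H_j)/(n - j) (T_z b)_j.
   All four identities are this with z = 2 or z = -2, applied to
     c_n = binomR (2n+v) (n+v/2) / binomR (n+v) (v/2)   and
     e_(2k) = C(2k,k) / binomR (k+v/2) (v/2),  e_(2k+1) = 0.
   Both T_2 e and c satisfy (n+v+1) x_(n+1) = 2 (2n+v+1) x_n with x_0 = 1 (for T_2 e this is
   Zeilberger's recurrence), so T_2 e = c and hence T_(-2) c = e; v = 0 gives the classical case.
   Of Gamma we only need Gamma(x+1) = x Gamma(x), Gamma(1) = 1 and Gamma(x) <> 0 off the poles,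
   which follow from the Gauss product once it converges; for x > 0 it is increasing and bounded
   (by ln n <= H_n and H2_n <= 2), and the functional equation carries this to all non-poles. *)

From Stdlib Require Import Reals Factorial Binomial Lra Lia.
From Coquelicot Require Import Coquelicot.
Open Scope R_scope.

Lemma sumR_S f m : sumR f (S m) = sumR f m + f m.
Proof. reflexivity. Qed.

Lemma sumR_ext f g m : (forall i, (i < m)%nat -> f i = g i) -> sumR f m = sumR g m.
Proof.
  induction m as [|m IH]; intros Hfg; simpl; [reflexivity|].
  rewrite IH, Hfg by (lia || (intros; apply Hfg; lia)). reflexivity.
Qed.

Lemma sumR_add f g m : sumR (fun i => f i + g i) m = sumR f m + sumR g m.
Proof. induction m as [|m IH]; simpl; [lra|]. rewrite IH; ring. Qed.

Lemma sumR_sub f g m : sumR (fun i => f i - g i) m = sumR f m - sumR g m.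
Proof. induction m as [|m IH]; simpl; [lra|]. rewrite IH; ring. Qed.

Lemma sumR_scal c f m : sumR (fun i => c * f i) m = c * sumR f m.
Proof. induction m as [|m IH]; simpl; [lra|]. rewrite IH; ring. Qed.

Lemma sumR_eq0 f m : (forall i, (i < m)%nat -> f i = 0) -> sumR f m = 0.
Proof.
  intros Hf. rewrite (sumR_ext f (fun _ => 0)) by exact Hf.
  clear Hf. induction m as [|m IH]; simpl; lra.
Qed.

Lemma sumR_Sl f m : sumR f (S m) = f 0%nat + sumR (fun i => f (S i)) m.
Proof. induction m as [|m IH]; simpl in *; [lra|]. rewrite IH; ring. Qed.

Lemma sumR_trunc f p m : (p <= m)%nat -> (forall i, (p <= i < m)%nat -> f i = 0) ->
  sumR f m = sumR f p.
Proof.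
  intros Hpm Hf. induction m as [|m IH].
  - replace p with 0%nat by lia. reflexivity.
  - destruct (Nat.eq_dec p (S m)) as [->|Hp]; [reflexivity|].
    rewrite sumR_S, IH, Hf by (lia || (intros; apply Hf; lia)). ring.
Qed.

Lemma sumR_exchange (f : nat -> nat -> R) p q :
  sumR (fun i => sumR (f i) q) p = sumR (fun j => sumR (fun i => f i j) p) q.
Proof.
  induction p as [|p IH]; simpl.
  - symmetry; apply sumR_eq0; reflexivity.
  - rewrite IH, <- sumR_add. reflexivity.
Qed.

Lemma sumR_even f m : (forall k, f (2 * k + 1)%nat = 0) ->
  sumR f m = sumR (fun k => f (2 * k)%nat) ((m + 1) / 2).
Proof.
  intros Hodd.
  assert (Hpair : forall q, sumR f (2 * q) = sumR (fun k => f (2 * k)%nat) q).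
  { induction q as [|q IH]; [reflexivity|].
    replace (2 * S q)%nat with (S (2 * q + 1)) by lia.
    rewrite sumR_S, Hodd, Nat.add_1_r, sumR_S, IH. simpl. ring. }
  destruct (Nat.Even_or_Odd m) as [[q ->]|[q ->]].
  - replace ((2 * q + 1) / 2)%nat with q by (apply (Nat.div_unique _ _ _ 1); lia).
    apply Hpair.
  - replace ((2 * q + 1 + 1) / 2)%nat with (S q) by (apply (Nat.div_unique _ _ _ 0); lia).
    rewrite Nat.add_1_r, sumR_S, Hpair. reflexivity.
Qed.

(* Pascal's triangle; unlike [Binomial.C] it vanishes for k > n. *)
Fixpoint choose (n k : nat) : R :=
  match n, k with
  | _, O => 1
  | O, S _ => 0
  | S n', S k' => choose n' k' + choose n' (S k')
  end.

Lemma choose_0_r n : choose n 0 = 1.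
Proof. destruct n; reflexivity. Qed.

Lemma choose_SS n k : choose (S n) (S k) = choose n k + choose n (S k).
Proof. reflexivity. Qed.

Lemma choose_small n k : (n < k)%nat -> choose n k = 0.
Proof.
  revert k; induction n as [|n IH]; intros [|k] Hk; try lia; [reflexivity|].
  rewrite choose_SS, !IH by lia. ring.
Qed.

Lemma choose_diag n : choose n n = 1.
Proof.
  induction n as [|n IH]; [reflexivity|]. rewrite choose_SS, IH, choose_small by lia. ring.
Qed.

Lemma choose_succ_r n k : (INR k + 1) * choose n (S k) = (INR n - INR k) * choose n k.
Proof.
  revert k; induction n as [|n IH]; intros k.
  - destruct k; simpl; ring.
  - rewrite S_INR. destruct k as [|k].
    + rewrite choose_SS, !choose_0_r. specialize (IH 0%nat). rewrite choose_0_r in IH.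
      simpl in *. lra.
    + rewrite !choose_SS. pose proof (IH k) as Hk. pose proof (IH (S k)) as HSk.
      rewrite S_INR in *. nra.
Qed.

Lemma choose_absorb n k : (INR k + 1) * choose (S n) (S k) = (INR n + 1) * choose n k.
Proof. rewrite choose_SS. pose proof (choose_succ_r n k). lra. Qed.

Lemma choose_binomN n k : (k <= n)%nat -> choose n k = binomN n k.
Proof.
  unfold binomN. revert k; induction n as [|n IH]; intros [|k] Hk.
  1, 3: rewrite choose_0_r, C_n_0; reflexivity.
  - lia.
  - rewrite choose_SS. destruct (Nat.eq_dec k n) as [->|Hkn].
    + rewrite choose_diag, choose_small, C_n_n by lia. ring.
    + rewrite !IH by lia. apply pascal. lia.
Qed.

Lemma sum_choose n k : sumR (fun j => choose j k) n = choose n (S k).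
Proof. induction n as [|n IH]; [reflexivity|]. rewrite sumR_S, IH, choose_SS. ring. Qed.

Definition btrans (z : R) (b : nat -> R) (n : nat) : R :=
  sumR (fun j => choose n j * z ^ (n - j) * b j) (S n).

Lemma btrans_ext z b c n : (forall j, b j = c j) -> btrans z b n = btrans z c n.
Proof. intros Hbc. apply sumR_ext. intros j _. rewrite Hbc. reflexivity. Qed.

Lemma btrans_lin z a b c n :
  btrans z (fun j => a * b j + c j) n = a * btrans z b n + btrans z c n.
Proof. unfold btrans. rewrite <- sumR_scal, <- sumR_add. apply sumR_ext. intros; ring. Qed.

Lemma btrans_O z b : btrans z b 0 = b 0%nat.
Proof. unfold btrans. simpl. ring. Qed.

Lemma btrans_S z b n : btrans z b (S n) = z * btrans z b n + btrans z (fun j => b (S j)) n.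
Proof.
  unfold btrans.
  assert (Hz : z * sumR (fun j => choose n j * z ^ (n - j) * b j) (S n)
               = z ^ S n * b 0%nat + sumR (fun j => choose n (S j) * z ^ (n - j) * b (S j)) (S n)).
  { rewrite sumR_Sl, choose_0_r, Nat.sub_0_r, Rmult_plus_distr_l, <- sumR_scal, sumR_S,
      (choose_small n (S n)), Rmult_0_l, Rmult_0_l, Rplus_0_r by lia.
    f_equal; [simpl; ring|]. apply sumR_ext. intros j Hj.
    replace (n - j)%nat with (S (n - S j)) by lia. simpl. ring. }
  rewrite Hz, sumR_Sl, choose_0_r, Nat.sub_0_r, Rplus_assoc, <- sumR_add.
  f_equal; [ring|]. apply sumR_ext. intros j _. rewrite choose_SS. simpl (S n - S j)%nat. ring.
Qed.

Lemma btrans_comp z w b n : btrans z (btrans w b) n = btrans (z + w) b n.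
Proof.
  revert b; induction n as [|n IH]; intros b.
  - rewrite !btrans_O. reflexivity.
  - rewrite btrans_S, (btrans_ext z (fun j => btrans w b (S j))
                         (fun j => w * btrans w b j + btrans w (fun i => b (S i)) j))
      by (intros; apply btrans_S).
    rewrite btrans_lin, !IH, btrans_S. ring.
Qed.

Lemma btrans_id b n : btrans 0 b n = b n.
Proof.
  unfold btrans. rewrite sumR_S, Nat.sub_diag, choose_diag, sumR_eq0; [simpl; ring|].
  intros i Hi. replace (n - i)%nat with (S (n - S i)) by lia. simpl. ring.
Qed.

Definition hdiff (n j : nat) : R := (H n - H j) / (INR n - INR j).

Lemma H_S m : H (S m) = H m + / INR (S m).
Proof. reflexivity. Qed.

Lemma H2_S m : H2 (S m) = H2 m + / INR (S m) ^ 2.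
Proof. reflexivity. Qed.

Lemma H_sumR m : H m = sumR (fun i => / INR (S i)) m.
Proof. induction m as [|m IH]; [reflexivity|]. rewrite H_S, IH. reflexivity. Qed.

Lemma hdiff_SS n j : (j < n)%nat ->
  hdiff (S n) (S j) = hdiff n j - / ((INR n + 1) * (INR j + 1)).
Proof.
  intros Hj. unfold hdiff. rewrite !H_S, !S_INR.
  pose proof (lt_INR _ _ Hj). pose proof (pos_INR j).
  field. lra.
Qed.

Lemma hdiff_S_l n : hdiff (S n) n = / INR (S n).
Proof. unfold hdiff. rewrite H_S, S_INR. pose proof (pos_INR n). field. lra. Qed.

Lemma H2_sum_hdiff n : H2 n = sumR (hdiff n) n.
Proof.
  induction n as [|n IH]; [reflexivity|].
  pose proof (pos_INR n) as Hn.
  rewrite sumR_Sl, (sumR_ext _ (fun i => hdiff n i - / (INR n + 1) * / INR (S i)))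
    by (intros i Hi; rewrite hdiff_SS, S_INR, Rinv_mult by lia; reflexivity).
  rewrite sumR_sub, sumR_scal, <- H_sumR, <- IH.
  unfold hdiff. rewrite H_S, H2_S, S_INR. change (H 0) with 0. change (INR 0) with 0. field. lra.
Qed.

Lemma choose_hdiff_SS n i k : (i < n)%nat ->
  choose (S i) (S k) * hdiff (S n) (S i)
  = (choose i k + choose i (S k)) * hdiff n i - / (INR n + 1) * (/ (INR k + 1) * choose i k).
Proof.
  intros Hi. rewrite hdiff_SS, <- choose_SS by exact Hi.
  pose proof (choose_absorb i k) as Habs.
  pose proof (pos_INR i). pose proof (pos_INR k). pose proof (pos_INR n).
  replace (choose (S i) (S k)) with ((INR i + 1) / (INR k + 1) * choose i k)
    by (apply (Rmult_eq_reg_l (INR k + 1)); [rewrite Habs; field|]; lra).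
  field. repeat split; lra.
Qed.

Lemma choose_H2_sub n k :
  choose n k * (H2 n - H2 k) = sumR (fun j => choose j k * hdiff n j) n.
Proof.
  revert k; induction n as [|n IH]; intros k.
  - destruct k; simpl; ring.
  - destruct k as [|k].
    + rewrite choose_0_r, (sumR_ext _ (hdiff (S n))), <- H2_sum_hdiff
        by (intros; rewrite choose_0_r; ring).
      simpl (H2 0). ring.
    + pose proof (pos_INR n). pose proof (pos_INR k).
      rewrite sumR_Sl, (sumR_ext _ _ n (fun i Hi => choose_hdiff_SS n i k Hi)), sumR_sub.
      rewrite (sumR_ext _ (fun i => choose i k * hdiff n i + choose i (S k) * hdiff n i))
        by (intros; ring).
      rewrite sumR_add, sumR_scal, sumR_scal, sum_choose, <- !IH, choose_SS.
      pose proof (choose_succ_r n k) as Hsucc.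
      replace (choose n (S k)) with ((INR n - INR k) / (INR k + 1) * choose n k)
        by (apply (Rmult_eq_reg_l (INR k + 1)); [rewrite Hsucc; field|]; lra).
      change (choose 0 (S k)) with 0. rewrite !H2_S, !S_INR, Rmult_0_l. field. lra.
Qed.

Lemma sum_choose_H2 z b n :
  sumR (fun k => choose n k * z ^ (n - k) * b k * H2 k) (S n)
  = btrans z b n * H2 n - sumR (fun j => z ^ (n - j) * hdiff n j * btrans z b j) n.
Proof.
  transitivity (btrans z b n * H2 n
    - sumR (fun k => z ^ (n - k) * b k * (choose n k * (H2 n - H2 k))) (S n)).
  { unfold btrans. rewrite Rmult_comm, <- sumR_scal, <- sumR_sub. apply sumR_ext; intros; ring. }
  f_equal.
  rewrite (sumR_ext _ (fun k => sumR (fun j => z ^ (n - k) * b k * (choose j k * hdiff n j)) n))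
    by (intros; rewrite choose_H2_sub, <- sumR_scal; reflexivity).
  rewrite sumR_exchange. apply sumR_ext. intros j Hj.
  unfold btrans. rewrite <- sumR_scal, (sumR_trunc _ (S j) (S n))
    by (lia || (intros i Hi; rewrite choose_small by lia; ring)).
  apply sumR_ext. intros i Hi.
  replace (n - i)%nat with ((n - j) + (j - i))%nat by lia. rewrite pow_add. ring.
Qed.

Lemma pow_sub_mul x n j : (j <= n)%nat -> x ^ n = x ^ (n - j) * x ^ j.
Proof. intros Hj. rewrite <- pow_add. f_equal. lia. Qed.

Definition nonpole (x : R) : Prop := forall m : nat, x <> - INR m.

Lemma nonpole_neq0 x : nonpole x -> x <> 0.
Proof. intros Hx E. apply (Hx 0%nat). simpl. lra. Qed.

Lemma nonpole_S x : nonpole x -> nonpole (x + 1).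
Proof. intros Hx m E. apply (Hx (S m)). rewrite S_INR. lra. Qed.

Lemma nonpole_add_neq0 x n : nonpole x -> x + INR n <> 0.
Proof. intros Hx E. apply (Hx n). lra. Qed.

Lemma nonpole_pos x : 0 < x -> nonpole x.
Proof. intros Hx m E. pose proof (pos_INR m). lra. Qed.

Lemma nonpole_half v : nonpole (v + 1) -> nonpole (v / 2 + 1).
Proof. intros hv m E. apply (hv (2 * m + 1)%nat). rewrite plus_INR, mult_INR. simpl. lra. Qed.

Lemma binomN_central_S k :
  (INR k + 1) * binomN (2 * S k) (S k) = 2 * (2 * INR k + 1) * binomN (2 * k) k.
Proof.
  unfold binomN, Binomial.C.
  replace (2 * S k - S k)%nat with (S k) by lia. replace (2 * k - k)%nat with k by lia.
  replace (2 * S k)%nat with (S (S (2 * k))) by lia.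
  rewrite !fact_simpl, !mult_INR, !S_INR, mult_INR. simpl (INR 2).
  pose proof (INR_fact_neq_0 k). pose proof (INR_fact_neq_0 (2 * k)). pose proof (pos_INR k).
  field. lra.
Qed.

Section Central.

Variable v : R.
Hypothesis hv : nonpole (v + 1).

Lemma add_v1_neq0 k : INR k + v + 1 <> 0.
Proof. intros E. apply (hv k). lra. Qed.

(* [cbin] and [ebin] are the c and e above and [dbin k] = 1 / binomR (k+v/2) (v/2), so that
   e_(2k) = C(2k,k) d_k; defining them by recurrences keeps this section free of Gamma. *)
Fixpoint cbin (k : nat) : R :=
  match k with
  | O => 1
  | S k' => 2 * (2 * INR k' + v + 1) / (INR k' + v + 1) * cbin k'
  end.

Fixpoint dbin (k : nat) : R :=
  match k with
  | O => 1
  | S k' => (INR k' + 1) / (v / 2 + INR k' + 1) * dbin k'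
  end.

Fixpoint ebin (j : nat) : R :=
  match j with
  | O => 1
  | S O => 0
  | S (S j') => 4 * (INR j' + 1) / (v + INR j' + 2) * ebin j'
  end.

Lemma ebin_SS j : ebin (S (S j)) = 4 * (INR j + 1) / (v + INR j + 2) * ebin j.
Proof. reflexivity. Qed.

Lemma ebin_odd k : ebin (2 * k + 1) = 0.
Proof.
  induction k as [|k IH]; [reflexivity|].
  replace (2 * S k + 1)%nat with (S (S (2 * k + 1))) by lia. rewrite ebin_SS, IH. ring.
Qed.

Lemma ebin_even k : ebin (2 * k) = binomN (2 * k) k * dbin k.
Proof.
  induction k as [|k IH].
  - unfold binomN, Binomial.C. simpl. field.
  - replace (2 * S k)%nat with (S (S (2 * k))) at 1 by lia.
    pose proof (binomN_central_S k) as Hc. pose proof (add_v1_neq0 (S (2 * k))) as Hv.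
    pose proof (pos_INR k).
    rewrite S_INR, mult_INR in Hv. simpl (INR 2) in Hv.
    rewrite ebin_SS, IH, mult_INR. simpl (INR 2). cbn [dbin].
    replace (binomN (2 * S k) (S k)) with (2 * (2 * INR k + 1) * binomN (2 * k) k / (INR k + 1))
      by (rewrite <- Hc; field; lra).
    field. split; [lra|]. intros E. apply Hv. lra.
Qed.

(* 2^n / 2^j rather than 2^(n-j): no truncated subtraction when j > n. *)
Let term n j := choose n j * 2 ^ n / 2 ^ j * ebin j.

Lemma btrans_2_ebin n : btrans 2 ebin n = sumR (term n) (S n).
Proof.
  apply sumR_ext. intros j Hj. unfold term.
  rewrite (pow_sub_mul 2 n j) by lia. field. apply pow_nonzero. lra.
Qed.

(* Zeilberger's certificate: summed over j it telescopes to [btrans_2_ebin_rec]. *)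
Lemma term_rec n j :
  (INR n + v + 1) * term (S n) (S (S j))
  = 2 * (INR n + v + 3 + INR j) * term n (S (S j)) + 2 * (INR n - INR j) * term n j.
Proof.
  unfold term. rewrite !ebin_SS, choose_SS.
  pose proof (pos_INR j). pose proof (add_v1_neq0 (S j)) as Hv. rewrite S_INR in Hv.
  pose proof (choose_succ_r n j) as H1. pose proof (choose_succ_r n (S j)) as H2.
  rewrite S_INR in H2.
  replace (choose n (S (S j))) with ((INR n - (INR j + 1)) / (INR j + 1 + 1) * choose n (S j))
    by (apply (Rmult_eq_reg_l (INR j + 1 + 1)); [rewrite H2; field|]; lra).
  replace (choose n (S j)) with ((INR n - INR j) / (INR j + 1) * choose n j)
    by (apply (Rmult_eq_reg_l (INR j + 1)); [rewrite H1; field|]; lra).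
  assert (2 ^ j <> 0) by (apply pow_nonzero; lra).
  simpl pow. field. repeat split; lra.
Qed.

Lemma btrans_2_ebin_rec n :
  (INR n + v + 1) * btrans 2 ebin (S n) = 2 * (2 * INR n + v + 1) * btrans 2 ebin n.
Proof.
  rewrite !btrans_2_ebin.
  assert (Hterm0 : forall m, term m 0 = 2 ^ m)
    by (intros; unfold term; rewrite choose_0_r; cbn [ebin pow]; field).
  assert (Hterm1 : forall m, term m 1 = 0) by (intros; unfold term; cbn [ebin]; ring).
  assert (Hweights : 2 * (2 * INR n + v + 1) * sumR (term n) (S n)
    = sumR (fun j => 2 * (INR n + v + 1 + INR j) * term n j) (S (S n))
      + sumR (fun j => 2 * (INR n - INR j) * term n j) (S n)).
  { assert (Hlast : term n (S n) = 0)
      by (unfold term; rewrite choose_small by lia; unfold Rdiv; ring).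
    rewrite (sumR_S _ (S n)), Hlast, Rmult_0_r, Rplus_0_r, <- sumR_scal, <- sumR_add.
    apply sumR_ext. intros; ring. }
  rewrite Hweights, (sumR_S _ n), !sumR_Sl, Hterm0, Hterm1, !Hterm0, !Hterm1,
    Rmult_plus_distr_l, Rmult_plus_distr_l, <- sumR_scal,
    (sumR_ext _ _ n (fun j _ => term_rec n j)), sumR_add.
  rewrite (sumR_ext (fun i => 2 * (INR n + v + 1 + INR (S (S i))) * term n (S (S i)))
    (fun j => 2 * (INR n + v + 3 + INR j) * term n (S (S j))))
    by (intros; rewrite !S_INR; ring).
  rewrite Rminus_diag. simpl pow. change (INR 0) with 0. change (INR 1) with 1. ring.
Qed.

Lemma btrans_2_ebin_eq n : btrans 2 ebin n = cbin n.
Proof.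
  induction n as [|n IH]; [rewrite btrans_O; reflexivity|].
  pose proof (add_v1_neq0 n) as Hn.
  apply (Rmult_eq_reg_l (INR n + v + 1)); [|exact Hn].
  rewrite btrans_2_ebin_rec, IH. cbn [cbin]. field. exact Hn.
Qed.

Lemma btrans_m2_cbin n : btrans (-2) cbin n = ebin n.
Proof.
  rewrite (btrans_ext _ cbin (btrans 2 ebin)) by (intros; symmetry; apply btrans_2_ebin_eq).
  rewrite btrans_comp. replace (-2 + 2) with 0 by ring. apply btrans_id.
Qed.

Lemma sum_dbin_H2 n :
  sumR (fun k => binomN n (2 * k) * 2 ^ (n - 2 * k) * binomN (2 * k) k * dbin k * H2 (2 * k))
    (n / 2 + 1)
  = cbin n * H2 n - sumR (fun k => cbin k * 2 ^ (n - k) * hdiff n k) n.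
Proof.
  rewrite <- (btrans_2_ebin_eq n),
    (sumR_ext (fun k => cbin k * _ * _) (fun k => 2 ^ (n - k) * hdiff n k * btrans 2 ebin k))
    by (intros; rewrite btrans_2_ebin_eq; ring).
  rewrite <- sum_choose_H2, (sumR_even (fun k => choose n k * 2 ^ (n - k) * ebin k * H2 k))
    by (intros; rewrite ebin_odd; ring).
  replace ((S n + 1) / 2)%nat with (n / 2 + 1)%nat
    by (replace (S n + 1)%nat with (n + 1 * 2)%nat by lia; symmetry; apply Nat.div_add; lia).
  apply sumR_ext. intros k Hk.
  assert (Hkn : (2 * k <= n)%nat) by (pose proof (Nat.Div0.mul_div_le n 2); lia).
  rewrite choose_binomN, ebin_even by exact Hkn. ring.
Qed.

Lemma inv_pow_m2 k : / (-2) ^ k = (-1) ^ k / 2 ^ k.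
Proof.
  rewrite <- pow_inv. replace (/ -2) with (-1 * / 2) by field.
  rewrite Rpow_mult_distr, pow_inv. reflexivity.
Qed.

Lemma pow_m2_even k : (-2) ^ (2 * k) = 2 ^ (2 * k).
Proof. rewrite !pow_mult. f_equal. ring. Qed.

Lemma alt_sum_cbin_H2_ebin n :
  sumR (fun k => (-1) ^ k * binomN n k / 2 ^ k * cbin k * H2 k) (n + 1)
  = ebin n / (-2) ^ n * H2 n - sumR (fun j => hdiff n j * ebin j / (-2) ^ j) n.
Proof.
  assert (Hm2 : forall j, (-2) ^ j <> 0) by (intros; apply pow_nonzero; lra).
  transitivity (/ (-2) ^ n * sumR (fun k => choose n k * (-2) ^ (n - k) * cbin k * H2 k) (S n)).
  { rewrite Nat.add_1_r, <- sumR_scal. apply sumR_ext. intros k Hk.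
    assert (2 ^ k <> 0) by (apply pow_nonzero; lra).
    rewrite choose_binomN, (pow_sub_mul (-2) n k), Rinv_mult, (inv_pow_m2 k) by lia.
    field. split; auto. }
  rewrite sum_choose_H2, btrans_m2_cbin, Rmult_minus_distr_l, <- sumR_scal.
  f_equal; [unfold Rdiv; ring|]. apply sumR_ext. intros j Hj.
  rewrite btrans_m2_cbin, (pow_sub_mul (-2) n j) by lia. field. split; apply Hm2.
Qed.

Lemma alt_sum_cbin_H2 n :
  sumR (fun k => (-1) ^ k * binomN n k / 2 ^ k * cbin k * H2 k) (n + 1)
  = - sumR (fun k => binomN (2 * k) k / 2 ^ (2 * k) * dbin k * hdiff n (2 * k)) (n / 2)
    + (if Nat.even n
       then binomN n (n / 2) / 2 ^ n * dbin (n / 2) * H2 n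
       else - (binomN (n - 1) ((n - 1) / 2) * (2 / 2 ^ n) * dbin ((n - 1) / 2) * / INR n)).
Proof.
  rewrite alt_sum_cbin_H2_ebin, sumR_even by (intros; rewrite ebin_odd; unfold Rdiv; ring).
  rewrite (sumR_ext _ (fun k => binomN (2 * k) k / 2 ^ (2 * k) * dbin k * hdiff n (2 * k)))
    by (intros; rewrite ebin_even, pow_m2_even; field; apply pow_nonzero; lra).
  destruct (Nat.Even_or_Odd n) as [[m ->]|[m ->]].
  - rewrite Nat.even_even, ebin_even, pow_m2_even.
    replace ((2 * m + 1) / 2)%nat with m by (apply (Nat.div_unique _ _ _ 1); lia).
    replace (2 * m / 2)%nat with m by (apply (Nat.div_unique _ _ _ 0); lia).
    field. apply pow_nonzero; lra.
  - rewrite Nat.even_odd, ebin_odd.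
    replace ((2 * m + 1 + 1) / 2)%nat with (S m) by (apply (Nat.div_unique _ _ _ 0); lia).
    replace ((2 * m + 1) / 2)%nat with m by (apply (Nat.div_unique _ _ _ 1); lia).
    replace ((2 * m + 1 - 1) / 2)%nat with m by (apply (Nat.div_unique _ _ _ 0); lia).
    replace (2 * m + 1 - 1)%nat with (2 * m)%nat by lia.
    rewrite Nat.add_1_r, sumR_S, hdiff_S_l, S_INR. unfold Rdiv. rewrite Rmult_0_l, Rmult_0_l.
    pose proof (pos_INR (2 * m)). assert (2 ^ (2 * m) <> 0) by (apply pow_nonzero; lra).
    change (2 ^ S (2 * m)) with (2 * 2 ^ (2 * m)). field. lra.
Qed.

End Central.

Definition gauss (x : R) (n : nat) : R :=
  INR (fact n) * Rpower (INR n) x / prod_f_R0 (fun j => x + INR j) n.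

Lemma Gamma_of_lim x (L : R) : is_lim_seq (gauss x) L -> Gamma x = L.
Proof.
  intros HL. unfold Gamma. fold (gauss x). rewrite (is_lim_seq_unique _ _ HL). reflexivity.
Qed.

Lemma prod_neq0 x n : nonpole x -> prod_f_R0 (fun j => x + INR j) n <> 0.
Proof.
  intros Hx. induction n as [|n IH]; cbn [prod_f_R0].
  - apply nonpole_add_neq0, Hx.
  - apply Rmult_integral_contrapositive. split; [exact IH | apply nonpole_add_neq0, Hx].
Qed.

Lemma prod_pos x n : 0 < x -> 0 < prod_f_R0 (fun j => x + INR j) n.
Proof.
  intros Hx. induction n as [|n IH]; cbn [prod_f_R0].
  - simpl. lra.
  - pose proof (pos_INR (S n)). apply Rmult_lt_0_compat; lra.
Qed.

Lemma prod_shift x n :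
  x * prod_f_R0 (fun j => x + 1 + INR j) n = prod_f_R0 (fun j => x + INR j) (S n).
Proof.
  induction n as [|n IH]; [simpl; ring|].
  change (x * (prod_f_R0 (fun j => x + 1 + INR j) n * (x + 1 + INR (S n)))
          = prod_f_R0 (fun j => x + INR j) (S n) * (x + INR (S (S n)))).
  rewrite <- IH, (S_INR (S n)). ring.
Qed.

Lemma gauss_S x n : nonpole x -> (1 <= n)%nat ->
  gauss (x + 1) n = gauss x n * (x * INR n / (x + INR n + 1)).
Proof.
  intros Hx Hn. unfold gauss.
  assert (Hn0 : 0 < INR n) by (apply lt_0_INR; lia).
  pose proof (prod_neq0 x n Hx). pose proof (nonpole_neq0 x Hx).
  assert (Hlast : x + INR n + 1 <> 0) by (intros E; apply (Hx (S n)); rewrite S_INR; lra).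
  replace (prod_f_R0 (fun j => x + 1 + INR j) n)
    with (prod_f_R0 (fun j => x + INR j) n * (x + INR n + 1) / x)
    by (apply (Rmult_eq_reg_l x); [rewrite prod_shift; cbn [prod_f_R0]; rewrite S_INR; field|];
        auto).
  rewrite Rpower_plus, Rpower_1 by exact Hn0. field. auto.
Qed.

Lemma is_lim_seq_1_plus_inv c : is_lim_seq (fun n => 1 + c * / INR n) 1.
Proof.
  replace (Finite 1) with (Rbar_plus 1 (Rbar_mult c 0)) by (simpl; f_equal; ring).
  apply is_lim_seq_plus'; [apply is_lim_seq_const|].
  apply is_lim_seq_mult'; [apply is_lim_seq_const|].
  replace (Finite 0) with (Rbar_inv p_infty) by reflexivity.
  apply is_lim_seq_inv; [apply is_lim_seq_INR | discriminate].
Qed.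

Lemma is_lim_seq_ratio x : is_lim_seq (fun n => INR n / (x + INR n + 1)) 1.
Proof.
  apply is_lim_seq_ext_loc with (u := fun n => / (1 + (x + 1) * / INR n)).
  - exists 1%nat. intros n Hn. assert (0 < INR n) by (apply lt_0_INR; lia).
    replace (1 + (x + 1) * / INR n) with ((x + INR n + 1) / INR n) by (field; lra).
    destruct (Req_dec (x + INR n + 1) 0) as [E|E].
    + rewrite E. unfold Rdiv. rewrite Rmult_0_l, !Rinv_0. ring.
    + field. lra.
  - replace (Finite 1) with (Rbar_inv 1) by (simpl; f_equal; field).
    apply is_lim_seq_inv; [apply is_lim_seq_1_plus_inv | intros E; injection E; lra].
Qed.

Lemma exp_le_compat a b : a <= b -> exp a <= exp b.
Proof. intros [Hab | <-]; [left; apply exp_increasing; exact Hab | right; reflexivity]. Qed.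

Lemma inv_1_plus_le_exp t : 0 <= t -> / (1 + t) <= exp (- t + t ^ 2).
Proof.
  intros Ht. eapply Rle_trans; [|apply exp_le_compat with (a := - (t / (1 + t)))].
  - replace (/ (1 + t)) with (1 + - (t / (1 + t))) by (field; lra). apply exp_ineq1_le.
  - apply (Rmult_le_reg_l (1 + t)); [lra|]. field_simplify; [|lra].
    assert (0 <= t ^ 3) by (apply pow_le; exact Ht). nra.
Qed.

Lemma H2_le_2 n : H2 n <= 2.
Proof.
  assert (Htel : forall m, H2 (S m) <= 2 - / INR (S m)).
  { induction m as [|m IH]; [simpl; lra|].
    rewrite H2_S. pose proof (pos_INR m) as Hm. rewrite !S_INR in *.
    assert (/ (INR m + 1 + 1) ^ 2 <= / (INR m + 1) - / (INR m + 1 + 1)).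
    { apply (Rmult_le_reg_l ((INR m + 1) * (INR m + 1 + 1) ^ 2)); [nra|].
      field_simplify; repeat split; lra. }
    lra. }
  destruct n as [|n]; [simpl; lra|].
  pose proof (Htel n). assert (0 < / INR (S n)) by (apply Rinv_0_lt_compat, lt_0_INR; lia).
  lra.
Qed.

Lemma ln_le_H n : (1 <= n)%nat -> ln (INR n) <= H n.
Proof.
  intros Hn.
  assert (Hexp : forall m, INR (S m) <= exp (H m)).
  { induction m as [|m IH]; [simpl; rewrite exp_0; lra|].
    rewrite H_S, exp_plus. pose proof (exp_ineq1_le (/ INR (S m))).
    assert (0 < INR (S m)) by (apply lt_0_INR; lia).
    replace (INR (S (S m))) with (INR (S m) * (1 + / INR (S m)))
      by (rewrite (S_INR (S m)); field; lra).
    assert (0 < / INR (S m)) by (apply Rinv_0_lt_compat; lra).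
    apply Rmult_le_compat; lra. }
  rewrite <- (ln_exp (H n)). apply ln_le; [apply lt_0_INR; lia|].
  pose proof (Hexp n). rewrite S_INR in *. lra.
Qed.

Section GaussPositive.

Variable x : R.
Hypothesis hx : 0 < x.

Let fpart n := INR (fact n) / prod_f_R0 (fun j => x + INR j) n.

Lemma fpart_pos n : 0 < fpart n.
Proof. apply Rdiv_lt_0_compat; [apply lt_0_INR, lt_O_fact | apply prod_pos, hx]. Qed.

Lemma fpart_S n : fpart (S n) = fpart n * (INR (S n) / (x + INR (S n))).
Proof.
  unfold fpart. rewrite fact_simpl, mult_INR. cbn [prod_f_R0].
  pose proof (prod_pos x n hx). pose proof (pos_INR (S n)). field. lra.
Qed.

Lemma gauss_fpart n : gauss x n = fpart n * exp (x * ln (INR n)).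
Proof. unfold gauss, fpart, Rpower. field. apply Rgt_not_eq, prod_pos, hx. Qed.

(* Each factor (n+1)/(x+n+1) = 1/(1+t) with t = x/(n+1) costs at most exp(-t+t^2). *)
Lemma fpart_le n : x * fpart n <= exp (- x * H n + x ^ 2 * H2 n).
Proof.
  induction n as [|n IH].
  - unfold fpart. cbn [fact prod_f_R0 H H2]. simpl (INR _).
    replace (- x * 0 + x ^ 2 * 0) with 0 by ring. rewrite exp_0. right. field. lra.
  - rewrite fpart_S, H_S, H2_S.
    assert (Hn : 0 < INR (S n)) by (apply lt_0_INR; lia).
    set (t := x / INR (S n)).
    assert (Ht : 0 <= t) by (apply Rlt_le, Rdiv_lt_0_compat; assumption).
    replace (INR (S n) / (x + INR (S n))) with (/ (1 + t)) by (unfold t; field; lra).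
    replace (- x * (H n + / INR (S n)) + x ^ 2 * (H2 n + / INR (S n) ^ 2))
      with ((- x * H n + x ^ 2 * H2 n) + (- t + t ^ 2)) by (unfold t; field; lra).
    rewrite exp_plus, <- Rmult_assoc.
    pose proof (fpart_pos n).
    apply Rmult_le_compat; [nra | left; apply Rinv_0_lt_compat; lra | exact IH |].
    apply inv_1_plus_le_exp, Ht.
Qed.

Lemma gauss_le n : (1 <= n)%nat -> gauss x n <= exp (2 * x ^ 2) / x.
Proof.
  intros Hn. rewrite gauss_fpart.
  pose proof (fpart_le n) as Hf. pose proof (ln_le_H n Hn) as Hln. pose proof (H2_le_2 n) as H2n.
  pose proof (fpart_pos n) as Hfpos. pose proof (exp_pos (x * ln (INR n))) as Hepos.
  assert (Hbound : - x * H n + x ^ 2 * H2 n + x * ln (INR n) <= 2 * x ^ 2).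
  { assert (0 <= x ^ 2) by apply pow2_ge_0. nra. }
  apply (Rmult_le_reg_l x); [exact hx|].
  replace (x * (exp (2 * x ^ 2) / x)) with (exp (2 * x ^ 2)) by (field; lra).
  eapply Rle_trans; [|apply exp_le_compat, Hbound].
  rewrite exp_plus, <- Rmult_assoc. apply Rmult_le_compat_r; lra.
Qed.

Lemma gauss_le_S n : (1 <= n)%nat -> gauss x n <= gauss x (S n).
Proof.
  intros Hn. rewrite !gauss_fpart, fpart_S.
  assert (Hn0 : 0 < INR n) by (apply lt_0_INR; lia).
  assert (HSn : INR (S n) = INR n + 1) by apply S_INR.
  set (d := ln (INR (S n)) - ln (INR n)).
  assert (Hd : / INR (S n) <= d).
  { pose proof (exp_ineq1_le (ln (INR n / INR (S n)))) as Hle.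
    rewrite exp_ln in Hle by (apply Rdiv_lt_0_compat; lra).
    unfold d. rewrite ln_div in Hle by lra.
    replace (INR n / INR (S n)) with (1 - / INR (S n)) in Hle by (rewrite HSn; field; lra).
    lra. }
  replace (x * ln (INR (S n))) with (x * ln (INR n) + x * d) by (unfold d; ring).
  rewrite exp_plus.
  assert (Hgrow : 1 <= INR (S n) / (x + INR (S n)) * exp (x * d)).
  { pose proof (exp_ineq1_le (x * d)).
    assert (x / INR (S n) <= x * d) by (unfold Rdiv; apply Rmult_le_compat_l; lra).
    apply (Rmult_le_reg_l (x + INR (S n))); [lra|].
    replace ((x + INR (S n)) * (INR (S n) / (x + INR (S n)) * exp (x * d)))
      with (INR (S n) * exp (x * d)) by (field; lra).
    replace ((x + INR (S n)) * 1) with (INR (S n) * (1 + x / INR (S n))) by (field; lra).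
    apply Rmult_le_compat_l; lra. }
  pose proof (fpart_pos n). pose proof (exp_pos (x * ln (INR n))).
  replace (fpart n * (INR (S n) / (x + INR (S n))) * (exp (x * ln (INR n)) * exp (x * d)))
    with ((fpart n * exp (x * ln (INR n))) * (INR (S n) / (x + INR (S n)) * exp (x * d)))
    by ring.
  rewrite <- (Rmult_1_r (fpart n * exp (x * ln (INR n)))) at 1.
  apply Rmult_le_compat_l; [nra | exact Hgrow].
Qed.

Lemma gauss_cvg_pos : exists L, 0 < L /\ is_lim_seq (gauss x) L.
Proof.
  set (u n := gauss x (S n)).
  assert (Hincr : forall n, u n <= u (S n)) by (intros; apply gauss_le_S; lia).
  assert (Hbnd : forall n, u n <= exp (2 * x ^ 2) / x) by (intros; apply gauss_le; lia).
  destruct (ex_finite_lim_seq_incr u _ Hincr Hbnd) as [L HL].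
  exists L. split.
  - assert (Hu0 : forall n, u 0%nat <= u n)
      by (induction n; [lra | eapply Rle_trans; [apply IHn | apply Hincr]]).
    pose proof (is_lim_seq_le _ u (u 0%nat) L Hu0 (is_lim_seq_const _) HL) as Hle.
    assert (0 < u 0%nat) by (unfold u; rewrite gauss_fpart; apply Rmult_lt_0_compat;
      [apply fpart_pos | apply exp_pos]).
    simpl in Hle. lra.
  - apply is_lim_seq_incr_1, HL.
Qed.

End GaussPositive.

(* Descend from the positive half-line with gauss x = gauss (x + 1) * (x + n + 1) / (x n). *)
Lemma gauss_cvg x : nonpole x -> exists L, L <> 0 /\ is_lim_seq (gauss x) L.
Proof.
  intros Hx. destruct (INR_unbounded (- x)) as [m Hm].
  assert (Hpos : 0 < x + INR m) by lra. clear Hm. revert x Hx Hpos.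
  induction m as [|m IH]; intros x Hx Hpos.
  - simpl in Hpos. rewrite Rplus_0_r in Hpos.
    destruct (gauss_cvg_pos x Hpos) as [L [HL HlimL]]. exists L. split; [lra | exact HlimL].
  - rewrite S_INR in Hpos.
    destruct (IH (x + 1)) as [L [HL HlimL]]; [apply nonpole_S, Hx | lra|].
    pose proof (nonpole_neq0 x Hx) as Hx0.
    exists (L * (/ x * 1)). split.
    { rewrite Rmult_1_r. apply Rmult_integral_contrapositive.
      split; [exact HL | apply Rinv_neq_0_compat, Hx0]. }
    apply is_lim_seq_ext_loc
      with (u := fun n => gauss (x + 1) n * (/ x * (1 + (x + 1) * / INR n))).
    + exists 1%nat. intros n Hn. rewrite gauss_S by assumption.
      assert (0 < INR n) by (apply lt_0_INR; lia).
      assert (x + INR n + 1 <> 0) by (intros E; apply (Hx (S n)); rewrite S_INR; lra).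
      field. repeat split; auto; lra.
    + apply is_lim_seq_mult'; [exact HlimL|].
      apply is_lim_seq_mult'; [apply is_lim_seq_const | apply is_lim_seq_1_plus_inv].
Qed.

Lemma Gamma_neq0 x : nonpole x -> Gamma x <> 0.
Proof.
  intros Hx. destruct (gauss_cvg x Hx) as [L [HL HlimL]].
  rewrite (Gamma_of_lim x L HlimL). exact HL.
Qed.

Lemma Gamma_S x : nonpole x -> Gamma (x + 1) = x * Gamma x.
Proof.
  intros Hx. destruct (gauss_cvg x Hx) as [L [_ HlimL]].
  rewrite (Gamma_of_lim x L HlimL). apply Gamma_of_lim.
  apply is_lim_seq_ext_loc with (u := fun n => gauss x n * (x * (INR n / (x + INR n + 1)))).
  - exists 1%nat. intros n Hn. rewrite gauss_S by assumption. unfold Rdiv. ring.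
  - replace (Finite (x * L)) with (Rbar_mult L (x * 1)) by (simpl; f_equal; ring).
    apply is_lim_seq_mult'; [exact HlimL|].
    apply is_lim_seq_mult'; [apply is_lim_seq_const | apply is_lim_seq_ratio].
Qed.

Lemma Gamma_1 : Gamma 1 = 1.
Proof.
  apply Gamma_of_lim.
  assert (Hprod : forall n, prod_f_R0 (fun j => 1 + INR j) n = INR (fact (S n))).
  { induction n as [|n IH]; [simpl; lra|].
    cbn [prod_f_R0]. rewrite IH, (fact_simpl (S n)), mult_INR, (S_INR (S n)). ring. }
  apply is_lim_seq_ext_loc with (u := fun n => INR n / (0 + INR n + 1)).
  - exists 1%nat. intros n Hn. unfold gauss.
    rewrite Hprod, Rpower_1, fact_simpl, mult_INR, S_INR by (apply lt_0_INR; lia).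
    pose proof (INR_fact_neq_0 n). pose proof (pos_INR n). field. lra.
  - apply is_lim_seq_ratio.
Qed.

Fixpoint rising (x : R) (k : nat) : R :=
  match k with O => 1 | S k' => rising x k' * (x + INR k') end.

Lemma rising_neq0 x k : nonpole x -> rising x k <> 0.
Proof.
  intros Hx. induction k as [|k IH]; simpl; [lra|].
  apply Rmult_integral_contrapositive. split; [exact IH | apply nonpole_add_neq0, Hx].
Qed.

Lemma rising_1 k : rising 1 k = INR (fact k).
Proof.
  induction k as [|k IH]; [reflexivity|].
  simpl rising. rewrite IH, fact_simpl, mult_INR, S_INR. ring.
Qed.

Lemma Gamma_add_nat x k : nonpole x -> Gamma (x + INR k) = rising x k * Gamma x.
Proof.
  intros Hx. induction k as [|k IH]; [simpl; rewrite Rplus_0_r; ring|].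
  rewrite S_INR. replace (x + (INR k + 1)) with ((x + INR k) + 1) by ring.
  rewrite Gamma_S, IH; [simpl; ring|].
  intros m E. apply (Hx (m + k)%nat). rewrite plus_INR. lra.
Qed.

Lemma dbin_rising v k : nonpole (v / 2 + 1) -> dbin v k = INR (fact k) / rising (v / 2 + 1) k.
Proof.
  intros hv. induction k as [|k IH]; [simpl; field|].
  cbn [dbin rising]. rewrite IH, fact_simpl, mult_INR, S_INR.
  pose proof (rising_neq0 _ k hv). pose proof (nonpole_add_neq0 _ k hv).
  field. split; [lra | assumption].
Qed.

Lemma cbin_rising v k : nonpole (v + 1) ->
  cbin v k = rising (v + 1) (2 * k) / (rising (v / 2 + 1) k * rising (v + 1) k).
Proof.
  intros hv. pose proof (nonpole_half v hv) as hv2.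
  induction k as [|k IH]; [simpl; field|].
  replace (2 * S k)%nat with (S (S (2 * k))) by lia. cbn [cbin rising]. rewrite IH.
  pose proof (rising_neq0 _ k hv2). pose proof (rising_neq0 _ k hv).
  pose proof (nonpole_add_neq0 _ k hv2). pose proof (nonpole_add_neq0 _ k hv).
  rewrite S_INR, mult_INR. simpl (INR 2). field. repeat split; try assumption; lra.
Qed.

Lemma dbin_binomR v k : nonpole (v + 1) -> dbin v k = / binomR ((2 * INR k + v) / 2) (v / 2).
Proof.
  intros hv. pose proof (nonpole_half v hv) as hv2. unfold binomR.
  replace ((2 * INR k + v) / 2 + 1) with (v / 2 + 1 + INR k) by field.
  replace ((2 * INR k + v) / 2 - v / 2 + 1) with (1 + INR k) by field.
  rewrite !Gamma_add_nat, Gamma_1, rising_1, dbin_rising by (apply hv2 || apply nonpole_pos; lra).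
  pose proof (rising_neq0 _ k hv2). pose proof (Gamma_neq0 _ hv2). pose proof (INR_fact_neq_0 k).
  field. auto.
Qed.

Lemma cbin_binomR v k : nonpole (v + 1) ->
  cbin v k = binomR (2 * INR k + v) ((2 * INR k + v) / 2) / binomR (INR k + v) (v / 2).
Proof.
  intros hv. pose proof (nonpole_half v hv) as hv2. unfold binomR.
  replace (2 * INR k + v + 1) with (v + 1 + INR (2 * k)) by (rewrite mult_INR; simpl; ring).
  replace ((2 * INR k + v) / 2 + 1) with (v / 2 + 1 + INR k) by field.
  replace (2 * INR k + v - (2 * INR k + v) / 2 + 1) with (v / 2 + 1 + INR k) by field.
  replace (INR k + v + 1) with (v + 1 + INR k) by ring.
  replace (INR k + v - v / 2 + 1) with (v / 2 + 1 + INR k) by field.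
  rewrite !Gamma_add_nat, cbin_rising by assumption.
  pose proof (rising_neq0 _ k hv2). pose proof (Gamma_neq0 _ hv2).
  pose proof (rising_neq0 _ k hv). pose proof (Gamma_neq0 _ hv).
  pose proof (rising_neq0 _ (2 * k) hv).
  field. auto.
Qed.

Lemma dbin_0 k : dbin 0 k = 1.
Proof.
  induction k as [|k IH]; [reflexivity|]. cbn [dbin]. rewrite IH.
  pose proof (pos_INR k). field. lra.
Qed.

Lemma cbin_0 k : cbin 0 k = binomN (2 * k) k.
Proof.
  induction k as [|k IH]; [unfold binomN, Binomial.C; simpl; field|].
  cbn [cbin]. rewrite IH. pose proof (binomN_central_S k) as Hc. pose proof (pos_INR k).
  apply (Rmult_eq_reg_l (INR k + 1)); [rewrite Hc; field|]; lra.
Qed.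

Lemma INR_even_half n : Nat.even n = true -> INR n = 2 * INR (n / 2).
Proof.
  intros Hn. destruct (Nat.Even_or_Odd n) as [[m ->]|[m ->]].
  - replace (2 * m / 2)%nat with m by (apply (Nat.div_unique _ _ _ 0); lia). apply mult_INR.
  - rewrite Nat.even_odd in Hn. discriminate.
Qed.

Lemma INR_odd_half n : Nat.even n = false -> INR n - 1 = 2 * INR ((n - 1) / 2).
Proof.
  intros Hn. destruct (Nat.Even_or_Odd n) as [[m ->]|[m ->]].
  - rewrite Nat.even_even in Hn. discriminate.
  - replace ((2 * m + 1 - 1) / 2)%nat with m by (apply (Nat.div_unique _ _ _ 0); lia).
    rewrite plus_INR, mult_INR. simpl. ring.
Qed.

Theorem theorem35 (n : nat) :
  (sumR (fun k => binomN n (2 * k) * 2 ^ (n - 2 * k) * binomN (2 * k) k * H2 (2 * k))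
        (n / 2 + 1)
   = binomN (2 * n) n * H2 n
     - sumR (fun k => binomN (2 * k) k * 2 ^ (n - k) * ((H n - H k) / (INR n - INR k))) n)
  /\
  (sumR (fun k => (-1) ^ k * binomN n k / 2 ^ k * binomN (2 * k) k * H2 k) (n + 1)
   = - sumR (fun k => binomN (2 * k) k / 2 ^ (2 * k)
                       * ((H n - H (2 * k)) / (INR n - INR (2 * k)))) (n / 2)
     + (if Nat.even n
        then / 2 ^ n * binomN n (n / 2) * H2 n
        else - (2 / 2 ^ n) * binomN (n - 1) ((n - 1) / 2) * / INR n))
  /\
  (forall v : R, (forall m : nat, v <> - INR (S m)) ->
    (sumR (fun k => binomN n (2 * k) * 2 ^ (n - 2 * k) * binomN (2 * k) k
                    / binomR ((2 * INR k + v) / 2) (v / 2) * H2 (2 * k))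
          (n / 2 + 1)
     = binomR (2 * INR n + v) ((2 * INR n + v) / 2) / binomR (INR n + v) (v / 2) * H2 n
       - sumR (fun k => binomR (2 * INR k + v) ((2 * INR k + v) / 2) * 2 ^ (n - k)
                        / binomR (INR k + v) (v / 2)
                        * ((H n - H k) / (INR n - INR k))) n)
    /\
    (sumR (fun k => (-1) ^ k * binomN n k / 2 ^ k
                    * binomR (2 * INR k + v) ((2 * INR k + v) / 2)
                    / binomR (INR k + v) (v / 2) * H2 k) (n + 1)
     = - sumR (fun k => binomN (2 * k) k / 2 ^ (2 * k) / binomR ((2 * INR k + v) / 2) (v / 2)
                         * ((H n - H (2 * k)) / (INR n - INR (2 * k)))) (n / 2)
       + (if Nat.even n
          then binomN n (n / 2) / 2 ^ n / binomR ((INR n + v) / 2) (v / 2) * H2 n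
          else - (binomN (n - 1) ((n - 1) / 2) * (2 / 2 ^ n)
                  / binomR ((INR n - 1 + v) / 2) (v / 2) * / INR n)))).
Proof.
  assert (h0 : nonpole (0 + 1)) by (apply nonpole_pos; lra).
  split; [|split].
  - rewrite (sumR_ext _ (fun k => binomN n (2 * k) * 2 ^ (n - 2 * k) * binomN (2 * k) k
                                  * dbin 0 k * H2 (2 * k)))
      by (intros; rewrite dbin_0; ring).
    rewrite (sum_dbin_H2 0 h0), cbin_0. f_equal.
    apply sumR_ext. intros. rewrite cbin_0. reflexivity.
  - rewrite (sumR_ext _ (fun k => (-1) ^ k * binomN n k / 2 ^ k * cbin 0 k * H2 k))
      by (intros; rewrite cbin_0; ring).
    rewrite (alt_sum_cbin_H2 0 h0). f_equal.
    + f_equal. apply sumR_ext. intros. rewrite dbin_0. unfold hdiff. ring.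
    + destruct (Nat.even n); rewrite dbin_0; unfold Rdiv; ring.
  - intros v hv.
    assert (hv1 : nonpole (v + 1)) by (intros m E; apply (hv m); rewrite S_INR; lra).
    split.
    + rewrite (sumR_ext _ (fun k => binomN n (2 * k) * 2 ^ (n - 2 * k) * binomN (2 * k) k
                                    * dbin v k * H2 (2 * k)))
        by (intros k _; rewrite (dbin_binomR v k hv1); unfold Rdiv; ring).
      rewrite (sum_dbin_H2 v hv1), (cbin_binomR v n hv1). f_equal.
      apply sumR_ext. intros. rewrite (cbin_binomR v _ hv1). unfold hdiff, Rdiv. ring.
    + rewrite (sumR_ext _ (fun k => (-1) ^ k * binomN n k / 2 ^ k * cbin v k * H2 k))
        by (intros; rewrite (cbin_binomR v _ hv1); unfold Rdiv; ring).
      rewrite (alt_sum_cbin_H2 v hv1). f_equal.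
      * f_equal. apply sumR_ext. intros. rewrite (dbin_binomR v _ hv1). unfold hdiff, Rdiv. ring.
      * destruct (Nat.even n) eqn:Hn; rewrite (dbin_binomR v _ hv1).
        -- rewrite (INR_even_half n Hn). unfold Rdiv. ring.
        -- rewrite <- (INR_odd_half n Hn). unfold Rdiv. ring.
Qed.
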